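(* Let $A,B$ be closed densely defined operators in $\mathcal H$ and $G$ a bounded metric operator such that $GD(A)\subseteq D(B)$ and $BG\xi=GA\xi$ for all $\xi\in D(A)$. Let $A^\star$ be defined by $D(A^\star)=\{\eta\in\mathcal H: G\eta\in D(A^* ),\ A^*G\eta\in D(G^{-1})\}$, $A^\star\eta=G^{-1}A^*G\eta$. Then $A^\star$ is densely defined, and $B_0:=(A^\star)^*$ satisfies $GD(A)\subseteq D(B_0)$ and $B_0G\xi=GA\xi$ for all $\xi\in D(A)$; moreover $B_0\subseteq B'$ for every closed operator $B'$ satisfying $GD(A)\subseteq D(B')$ and $B'G\xi=GA\xi$ for all $\xi\in D(A)$ (so $B_0$ is minimal among such closed operators), and $GD(A)$ is a core for $B_0$.
   Context: A metric operator in $\mathcal H$ is a self-adjoint operator $G$ with $\langle G\xi,\xi\rangle>0$ for all nonzero $\xi\in D(G)$; $G^{-1}$ denotes its (possibly unbounded) inverse. $A^*$ denotes the Hilbert space adjoint. *)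

From Stdlib Require Import Reals ClassicalEpsilon.
Open Scope R_scope.

Record C := mkC { Re : R; Im : R }.
Definition C0 : C := mkC 0 0.
Definition Cadd (a b : C) : C := mkC (Re a + Re b) (Im a + Im b).
Definition Cmul (a b : C) : C :=
  mkC (Re a * Re b - Im a * Im b) (Re a * Im b + Im a * Re b).
Definition Cconj (a : C) : C := mkC (Re a) (- Im a).
Definition Cneg1 : C := mkC (-1) 0.

Record Hilbert := {
  carrier :> Type;
  hzero : carrier;
  hadd : carrier -> carrier -> carrier;
  hscal : C -> carrier -> carrier;
  inner : carrier -> carrier -> C;
  hadd_assoc : forall x y z, hadd x (hadd y z) = hadd (hadd x y) z;
  hadd_comm : forall x y, hadd x y = hadd y x;
  hadd_zero : forall x, hadd x hzero = x;
  hadd_opp : forall x, hadd x (hscal Cneg1 x) = hzero;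
  hscal_one : forall x, hscal (mkC 1 0) x = x;
  hscal_assoc : forall a b x, hscal a (hscal b x) = hscal (Cmul a b) x;
  hscal_addr : forall a x y, hscal a (hadd x y) = hadd (hscal a x) (hscal a y);
  hscal_addl : forall a b x, hscal (Cadd a b) x = hadd (hscal a x) (hscal b x);
  inner_addl : forall x y z, inner (hadd x y) z = Cadd (inner x z) (inner y z);
  inner_scall : forall a x z, inner (hscal a x) z = Cmul a (inner x z);
  inner_conj : forall x y, inner y x = Cconj (inner x y);
  inner_pos : forall x, 0 <= Re (inner x x);
  inner_def : forall x, inner x x = C0 -> x = hzero;
  hcomplete : forall u : nat -> carrier,
    (forall eps, 0 < eps -> exists N, forall m n, (N <= m)%nat -> (N <= n)%nat ->
       sqrt (Re (inner (hadd (u m) (hscal Cneg1 (u n))) (hadd (u m) (hscal Cneg1 (u n)))))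
         < eps) ->
    exists l, forall eps, 0 < eps -> exists N, forall n, (N <= n)%nat ->
       sqrt (Re (inner (hadd (u n) (hscal Cneg1 l)) (hadd (u n) (hscal Cneg1 l)))) < eps
}.

Arguments hzero {h}.
Arguments hadd {h}.
Arguments hscal {h}.
Arguments inner {h}.

Section Ops.
Variable H : Hilbert.

Definition hsub (x y : H) : H := hadd x (hscal Cneg1 y).
Definition hnorm (x : H) : R := sqrt (Re (inner x x)).

Definition converges (u : nat -> H) (l : H) : Prop :=
  forall eps, 0 < eps -> exists N, forall n, (N <= n)%nat -> hnorm (hsub (u n) l) < eps.

(* A (possibly unbounded) operator: a domain and an action (meaningful on the
   domain only). *)
Record Op := mkOp { dom : H -> Prop; app : H -> H }.

Definition linear_op (T : Op) : Prop :=
  dom T hzero /\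
  (forall x y, dom T x -> dom T y -> dom T (hadd x y) /\
       app T (hadd x y) = hadd (app T x) (app T y)) /\
  (forall a x, dom T x -> dom T (hscal a x) /\ app T (hscal a x) = hscal a (app T x)).

Definition densely_defined (T : Op) : Prop :=
  forall x eps, 0 < eps -> exists y, dom T y /\ hnorm (hsub x y) < eps.

Definition closed_op (T : Op) : Prop :=
  forall (u : nat -> H) x y, (forall n, dom T (u n)) ->
    converges u x -> converges (fun n => app T (u n)) y ->
    dom T x /\ app T x = y.

Definition op_incl (T S : Op) : Prop :=
  forall x, dom T x -> dom S x /\ app S x = app T x.

Definition adjoint (T : Op) : Op :=
  mkOp (fun eta => exists z, forall xi, dom T xi -> inner (app T xi) eta = inner xi z)
       (fun eta => epsilon (inhabits hzero)
          (fun z => forall xi, dom T xi -> inner (app T xi) eta = inner xi z)).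

Definition self_adjoint (T : Op) : Prop :=
  (forall x, dom (adjoint T) x <-> dom T x) /\
  (forall x, dom T x -> app (adjoint T) x = app T x).

Definition metric_operator (G : Op) : Prop :=
  linear_op G /\ self_adjoint G /\
  (forall x, dom G x -> x <> hzero -> 0 < Re (inner (app G x) x)).

Definition bounded_op (G : Op) : Prop :=
  (forall x, dom G x) /\ exists M, forall x, hnorm (app G x) <= M * hnorm x.

Definition op_inverse (G : Op) : Op :=
  mkOp (fun y => exists x, dom G x /\ app G x = y)
       (fun y => epsilon (inhabits hzero) (fun x => dom G x /\ app G x = y)).

Definition star_op (G A : Op) : Op :=
  mkOp (fun eta => dom (adjoint A) (app G eta) /\
                   dom (op_inverse G) (app (adjoint A) (app G eta)))
       (fun eta => app (op_inverse G) (app (adjoint A) (app G eta))).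

Definition is_core (T : Op) (D : H -> Prop) : Prop :=
  (forall x, D x -> dom T x) /\
  (forall x, dom T x -> exists u : nat -> H, (forall n, D (u n)) /\
      converges u x /\ converges (fun n => app T (u n)) (app T x)).

Definition intertwines (G A B : Op) : Prop :=
  forall xi, dom A xi -> dom B (app G xi) /\ app B (app G xi) = app G (app A xi).

End Ops.

Arguments mkOp {H}.
Arguments dom {H}.
Arguments app {H}.

(* Put M := {(G xi, G A xi) : xi ∈ D(A)} ⊆ H ⊕ H. Unwinding definitions,
   (a, b) ⊥ M exactly when b ∈ D(A⋆) and A⋆ b = -a, so the closure M^⊥⊥ of M
   is the graph of (A⋆)^*. Since M lies in the graph of the closed operator B,
   a pair (0, w) ∈ M^⊥⊥ has w = B 0 = 0; applied to w ⊥ D(A⋆) this gives the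
   density of D(A⋆). Intertwining, the core property and minimality are then
   read off from graph((A⋆)^* ) = closure M. The analytic input is the
   projection theorem M^⊥⊥ ⊆ closure M, proved with a minimizing sequence. *)

From Stdlib Require Import Reals Lra Lia ClassicalEpsilon Classical.
Open Scope R_scope.

Lemma C_eq (a b : C) : Re a = Re b -> Im a = Im b -> a = b.
Proof. destruct a, b; simpl; intros; subst; reflexivity. Qed.

Ltac C_ring := apply C_eq; simpl; try ring.

Section InnerProduct.
Context {X : Hilbert}.

Lemma hscal_C0 (x : X) : hscal C0 x = hzero.
Proof.
  assert (E : hadd (hscal C0 x) x = x).
  { rewrite <- (hscal_one X x) at 2. rewrite <- hscal_addl.
    replace (Cadd C0 (mkC 1 0)) with (mkC 1 0) by C_ring. apply hscal_one. }
  rewrite <- (hadd_zero X (hscal C0 x)), <- (hadd_opp X x), hadd_assoc, E.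
  reflexivity.
Qed.

Lemma inner_zero_l (y : X) : inner hzero y = C0.
Proof. rewrite <- (hscal_C0 hzero), inner_scall. C_ring. Qed.

Lemma inner_zero_r (y : X) : inner y hzero = C0.
Proof. rewrite inner_conj, inner_zero_l. C_ring. Qed.

Lemma inner_addr (x y z : X) : inner x (hadd y z) = Cadd (inner x y) (inner x z).
Proof. rewrite inner_conj, inner_addl, (inner_conj X y x), (inner_conj X z x). C_ring. Qed.

Lemma inner_scalr a (x y : X) : inner x (hscal a y) = Cmul (Cconj a) (inner x y).
Proof. rewrite inner_conj, inner_scall, (inner_conj X y x). C_ring. Qed.

Lemma hsub_eq0 (v w : X) : hsub X v w = hzero -> v = w.
Proof.
  unfold hsub; intros E.
  assert (E2 : hadd (hadd v (hscal Cneg1 w)) w = hadd hzero w) by (rewrite E; reflexivity).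
  rewrite <- hadd_assoc, (hadd_comm X (hscal Cneg1 w) w), hadd_opp, hadd_zero in E2.
  rewrite E2, hadd_comm, hadd_zero. reflexivity.
Qed.

(* The projection argument only needs the real inner product [Re <x, y>] and
   real scalars; complex orthogonality is recovered at the end because the
   subspaces involved are closed under multiplication by [i]. *)
Definition rinner (x y : X) : R := Re (inner x y).
Definition sqnorm (x : X) : R := rinner x x.
Definition rscal (r : R) (x : X) : X := hscal (mkC r 0) x.

Lemma rinner_sym (x y : X) : rinner x y = rinner y x.
Proof. unfold rinner. rewrite (inner_conj X x y). reflexivity. Qed.

Lemma rinner_addl (x y z : X) : rinner (hadd x y) z = rinner x z + rinner y z.
Proof. unfold rinner. rewrite inner_addl. reflexivity. Qed.

Lemma rinner_addr (x y z : X) : rinner z (hadd x y) = rinner z x + rinner z y.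
Proof. unfold rinner. rewrite inner_addr. reflexivity. Qed.

Lemma rinner_scall r (x z : X) : rinner (hscal (mkC r 0) x) z = r * rinner x z.
Proof. unfold rinner. rewrite inner_scall. simpl. ring. Qed.

Lemma rinner_scalr r (x z : X) : rinner z (hscal (mkC r 0) x) = r * rinner z x.
Proof. unfold rinner. rewrite inner_scalr. simpl. ring. Qed.

Lemma rinner_zero_r (y : X) : rinner y hzero = 0.
Proof. unfold rinner. rewrite inner_zero_r. reflexivity. Qed.

Lemma sqnorm_ge0 (x : X) : 0 <= sqnorm x.
Proof. apply inner_pos. Qed.

Lemma sqnorm_eq0 (x : X) : sqnorm x = 0 -> x = hzero.
Proof.
  intro E. apply inner_def. apply C_eq; [exact E|].
  pose proof (inner_conj X x x) as F. apply (f_equal Im) in F. simpl in *. lra.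
Qed.

End InnerProduct.

Ltac rinner_expand := unfold sqnorm, hsub, rscal, Cneg1 in *;
  repeat rewrite ?rinner_addl, ?rinner_addr, ?rinner_scall, ?rinner_scalr in *.

Section InnerProductFacts.
Context {X : Hilbert}.

Lemma sqnorm_sub_sym (a b : X) : sqnorm (hsub X a b) = sqnorm (hsub X b a).
Proof. rinner_expand. rewrite (rinner_sym a b). ring. Qed.

Lemma rinner_sq_le (x y : X) : rinner x y * rinner x y <= sqnorm x * sqnorm y.
Proof.
  destruct (Req_dec (sqnorm y) 0) as [E|E].
  - apply sqnorm_eq0 in E. subst. rewrite rinner_zero_r.
    pose proof (sqnorm_ge0 x). pose proof (sqnorm_ge0 (@hzero X)). nra.
  - set (t := rinner x y / sqnorm y).
    pose proof (sqnorm_ge0 (hadd x (rscal (- t) y))) as P.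
    rinner_expand. rewrite (rinner_sym y x) in P.
    pose proof (sqnorm_ge0 y). unfold sqnorm in *.
    assert (t * rinner y y = rinner x y) by (unfold t; field; lra).
    nra.
Qed.

End InnerProductFacts.

Lemma sqrt_lt_iff a e : 0 <= a -> 0 < e -> (sqrt a < e <-> a < e * e).
Proof.
  intros Ha He; split; intro H.
  - rewrite <- (sqrt_sqrt a Ha). pose proof (sqrt_pos a). nra.
  - rewrite <- (sqrt_square e) by lra. apply sqrt_lt_1_alt. lra.
Qed.

Lemma inv_succ_small e : 0 < e -> exists N, forall n, (N <= n)%nat -> / (INR n + 1) < e.
Proof.
  intros He. destruct (archimed_cor1 e He) as [N [H1 H2]]. exists N. intros n Hn.
  apply le_INR in Hn. assert (0 < INR N) by (apply lt_0_INR; lia).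
  apply Rle_lt_trans with (/ INR N); auto. apply Rinv_le_contravar; lra.
Qed.

Lemma Un_cv_const (f : nat -> R) c : (forall n, f n = c) -> Un_cv f c.
Proof. intros Hf e He. exists O. intros. unfold Rdist. rewrite Hf, Rminus_diag, Rabs_R0. lra. Qed.

Lemma Un_cv_inv_succ : Un_cv (fun n => / (INR n + 1)) 0.
Proof.
  intros e He. destruct (inv_succ_small e He) as [N HN]. exists N. intros n Hn.
  unfold Rdist. rewrite Rminus_0_r, Rabs_pos_eq; [apply HN; lia|].
  apply Rlt_le, Rinv_0_lt_compat. pose proof (pos_INR n). lra.
Qed.

Lemma Un_cv_0_of_sq_le (v s : nat -> R) K : 0 <= K ->
  (forall n, v n * v n <= K * s n) -> Un_cv s 0 -> Un_cv v 0.
Proof.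
  intros HK Hvs Hs e He.
  destruct (Hs (e * e / (K + 1))) as [N HN].
  { apply Rdiv_lt_0_compat; nra. }
  exists N. intros n Hn. specialize (HN n Hn). specialize (Hvs n).
  unfold Rdist in *. rewrite Rminus_0_r in *.
  assert (s n < e * e / (K + 1)) by (apply Rabs_def2 in HN; lra).
  set (q := e * e / (K + 1)) in *.
  assert (Hq : q * (K + 1) = e * e) by (unfold q; field; lra).
  assert (0 < q) by (unfold q; apply Rdiv_lt_0_compat; nra).
  assert (v n * v n < e * e) by nra.
  rewrite <- (Rabs_pos_eq e) by lra. apply Rsqr_lt_abs_0. unfold Rsqr. lra.
Qed.

Section Convergence.
Context {X : Hilbert}.

Lemma converges_sqnormE (u : nat -> X) l : converges X u l <->
  forall c, 0 < c -> exists N, forall n, (N <= n)%nat -> sqnorm (hsub X (u n) l) < c.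
Proof.
  split.
  - intros Hc c Hc0. assert (Hs : 0 < sqrt c) by (apply sqrt_lt_R0; lra).
    destruct (Hc _ Hs) as [N HN]. exists N; intros n Hn.
    specialize (HN n Hn). apply (sqrt_lt_iff _ _ (sqnorm_ge0 _) Hs) in HN.
    now rewrite sqrt_sqrt in HN by lra.
  - intros Hc e He. destruct (Hc (e * e)) as [N HN]; [nra|].
    exists N; intros n Hn. apply (sqrt_lt_iff _ _ (sqnorm_ge0 _) He). now apply HN.
Qed.

Lemma cauchy_converges (u : nat -> X) :
  (forall c, 0 < c -> exists N, forall m n, (N <= m)%nat -> (N <= n)%nat ->
     sqnorm (hsub X (u m) (u n)) < c) ->
  exists l, converges X u l.
Proof.
  intros Hu. apply hcomplete. intros e He. destruct (Hu (e * e)) as [N HN]; [nra|].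
  exists N. intros m n Hm Hn. apply sqrt_lt_iff; auto; [apply sqnorm_ge0|]. now apply HN.
Qed.

Lemma converges_ext (f g : nat -> X) l :
  (forall n, f n = g n) -> converges X f l -> converges X g l.
Proof.
  intros E Hc e He. destruct (Hc e He) as [N HN]. exists N. intros n Hn. rewrite <- E. auto.
Qed.

Lemma converges_sqnorm_cv (u : nat -> X) l :
  converges X u l -> Un_cv (fun n => sqnorm (hsub X (u n) l)) 0.
Proof.
  intros Hc e He. destruct (proj1 (converges_sqnormE u l) Hc e He) as [N HN].
  exists N. intros n Hn. unfold Rdist. rewrite Rminus_0_r, Rabs_pos_eq by apply sqnorm_ge0.
  apply HN; lia.
Qed.

Lemma converges_rinner_cv (u : nat -> X) l w :
  converges X u l -> Un_cv (fun n => rinner (u n) w) (rinner l w).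
Proof.
  intros Hc.
  assert (D : Un_cv (fun n => rinner (hsub X (u n) l) w) 0).
  { apply (Un_cv_0_of_sq_le _ (fun n => sqnorm (hsub X (u n) l)) (sqnorm w) (sqnorm_ge0 w)).
    - intro n. rewrite (Rmult_comm (sqnorm w)). apply rinner_sq_le.
    - exact (converges_sqnorm_cv _ _ Hc). }
  intros e He. destruct (D e He) as [N HN]. exists N. intros n Hn.
  specialize (HN n Hn). unfold Rdist in *.
  replace (rinner (u n) w - rinner l w) with (rinner (hsub X (u n) l) w - 0)
    by (rinner_expand; ring).
  exact HN.
Qed.

Lemma converges_sqnorm_sub_cv (u : nat -> X) l a :
  converges X u l -> Un_cv (fun n => sqnorm (hsub X a (u n))) (sqnorm (hsub X a l)).
Proof.
  intros Hc.
  assert (Hr := converges_rinner_cv u l (hsub X a l) Hc).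
  assert (Hs := converges_sqnorm_cv u l Hc).
  intros e He. destruct (Hr (e / 4)) as [N1 HN1]; [lra|].
  destruct (Hs (e / 2)) as [N2 HN2]; [lra|].
  exists (max N1 N2). intros n Hn.
  specialize (HN1 n ltac:(lia)). specialize (HN2 n ltac:(lia)).
  unfold Rdist in *. rewrite Rminus_0_r in HN2.
  apply Rabs_def2 in HN1. apply Rabs_def2 in HN2.
  apply Rabs_def1; rinner_expand; rewrite ?(rinner_sym (u n) a), ?(rinner_sym (u n) l),
    ?(rinner_sym l a) in *; lra.
Qed.

End Convergence.

Lemma quadratic_ge0_linear_eq0 (a b : R) : 0 <= a ->
  (forall t, 0 <= t * t * a - 2 * t * b) -> b = 0.
Proof.
  intros Ha Hq. specialize (Hq (b / (a + 1))).
  assert (E : b / (a + 1) * (b / (a + 1)) * a - 2 * (b / (a + 1)) * b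
              = - (b * b) * (a + 2) / ((a + 1) * (a + 1))) by (field; lra).
  rewrite E in Hq. apply Rmult_le_compat_r with (r := (a + 1) * (a + 1)) in Hq; [|nra].
  field_simplify in Hq; [|lra]. nra.
Qed.

Section Projection.
Context {X : Hilbert} (M : X -> Prop).
Hypothesis M_nonempty : exists m, M m.
Hypothesis M_add : forall a b, M a -> M b -> M (hadd a b).
Hypothesis M_rscal : forall r a, M a -> M (rscal r a).
Variable x : X.

Lemma minimizing_sequence : exists d (u : nat -> X),
  (forall m, M m -> d <= sqnorm (hsub X x m)) /\
  (forall n, M (u n) /\ sqnorm (hsub X x (u n)) < d + / (INR n + 1)).
Proof.
  set (E := fun r => exists m, M m /\ r = - sqnorm (hsub X x m)).
  assert (Eb : bound E).
  { exists 0. intros r [m [_ ->]]. pose proof (sqnorm_ge0 (hsub X x m)). lra. }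
  assert (Ene : exists r, E r).
  { destruct M_nonempty as [m Hm]. exists (- sqnorm (hsub X x m)), m. auto. }
  destruct (completeness E Eb Ene) as [L [HL1 HL2]].
  exists (- L).
  assert (near : forall n, exists m, M m /\ sqnorm (hsub X x m) < - L + / (INR n + 1)).
  { intro n. assert (Hn : 0 < / (INR n + 1)).
    { apply Rinv_0_lt_compat. pose proof (pos_INR n). lra. }
    apply NNPP; intro N.
    enough (L <= L - / (INR n + 1)) by lra.
    apply HL2. intros r [m [Hm ->]]. apply Rnot_lt_le. intro C1. apply N. exists m.
    split; auto. lra. }
  destruct (choice _ near) as [u Hu]. exists u. split; auto.
  intros m Hm. enough (- sqnorm (hsub X x m) <= L) by lra. apply HL1. exists m. auto.
Qed.

Section MinimizingSequence.
Variables (d : R) (u : nat -> X).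
Hypothesis d_le : forall m, M m -> d <= sqnorm (hsub X x m).
Hypothesis u_near : forall n, M (u n) /\ sqnorm (hsub X x (u n)) < d + / (INR n + 1).

(* Parallelogram law applied to [x - u m] and [x - u n], the midpoint
   [(u m + u n) / 2] being in [M]. *)
Lemma minimizing_sequence_cauchy m n :
  sqnorm (hsub X (u m) (u n)) <= 2 * / (INR m + 1) + 2 * / (INR n + 1).
Proof.
  destruct (u_near m) as [Mm Dm]. destruct (u_near n) as [Mn Dn].
  pose proof (d_le _ (M_rscal (/ 2) _ (M_add _ _ Mm Mn))) as Lo.
  rinner_expand.
  rewrite ?(rinner_sym (u m) x), ?(rinner_sym (u n) x), ?(rinner_sym (u n) (u m)) in *. lra.
Qed.

Lemma minimizing_sequence_converges : exists p, converges X u p.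
Proof.
  apply cauchy_converges. intros c Hc. destruct (inv_succ_small (c / 4)) as [N HN]; [lra|].
  exists N. intros m n Hm Hn. pose proof (minimizing_sequence_cauchy m n).
  pose proof (HN m Hm). pose proof (HN n Hn). lra.
Qed.

Variable p : X.
Hypothesis u_p : converges X u p.

Lemma residual_sqnorm_le : sqnorm (hsub X x p) <= d.
Proof.
  replace d with (d + 0) by ring.
  apply (@Rle_cv_lim (fun n => sqnorm (hsub X x (u n))) (fun n => d + / (INR n + 1))).
  - intro n. apply Rlt_le, (proj2 (u_near n)).
  - exact (converges_sqnorm_sub_cv u p x u_p).
  - apply CV_plus; [now apply Un_cv_const | apply Un_cv_inv_succ].
Qed.

Lemma residual_shift_ge t m : M m -> d <= sqnorm (hsub X (hsub X x p) (rscal t m)).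
Proof.
  intro Hm.
  replace (sqnorm (hsub X (hsub X x p) (rscal t m)))
    with (sqnorm (hsub X (hsub X x (rscal t m)) p)) by
    (rinner_expand; rewrite ?(rinner_sym p x), ?(rinner_sym m x), ?(rinner_sym m p); ring).
  apply (@Rle_cv_lim (fun _ => d) (fun n => sqnorm (hsub X (hsub X x (rscal t m)) (u n)))).
  - intro n. replace (sqnorm (hsub X (hsub X x (rscal t m)) (u n)))
      with (sqnorm (hsub X x (hadd (u n) (rscal t m)))).
    + apply d_le, M_add; [apply u_near | now apply M_rscal].
    + rinner_expand. rewrite ?(rinner_sym (u n) x), ?(rinner_sym m x), ?(rinner_sym m (u n)). ring.
  - now apply Un_cv_const.
  - exact (converges_sqnorm_sub_cv u p _ u_p).
Qed.

Lemma residual_orth m : M m -> rinner m (hsub X x p) = 0.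
Proof.
  intro Hm. apply (quadratic_ge0_linear_eq0 (sqnorm m)); [apply sqnorm_ge0|].
  intro t. pose proof (residual_shift_ge t m Hm) as Hshift. pose proof residual_sqnorm_le.
  set (w := hsub X x p) in *. unfold rscal, hsub, Cneg1 in Hshift. unfold sqnorm in *.
  rewrite ?rinner_addl, ?rinner_addr, ?rinner_scall, ?rinner_scalr, (rinner_sym w m) in Hshift.
  lra.
Qed.

End MinimizingSequence.

(* The projection theorem in the form [M^⊥⊥ ⊆ closure M]. *)
Theorem approx_of_orth_orth :
  (forall w, (forall m, M m -> rinner m w = 0) -> rinner x w = 0) ->
  exists u, (forall n, M (u n)) /\ converges X u x.
Proof.
  intro Hx.
  destruct minimizing_sequence as [d [u [d_le u_near]]].
  destruct (minimizing_sequence_converges d u d_le u_near) as [p u_p].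
  set (w := hsub X x p).
  assert (orth : forall m, M m -> rinner m w = 0) by exact (residual_orth d u d_le u_near p u_p).
  assert (pw : rinner p w = 0).
  { apply (UL_sequence _ _ _ (converges_rinner_cv u p w u_p)), Un_cv_const.
    intro n. apply orth, u_near. }
  assert (w0 : w = hzero).
  { apply sqnorm_eq0. unfold sqnorm. unfold w at 1. unfold hsub, Cneg1.
    rewrite rinner_addl, rinner_scall, (Hx w orth), pw. ring. }
  exists u. split; [intro n; apply u_near|].
  now rewrite (hsub_eq0 x p w0).
Qed.

End Projection.

Section Product.
Context {X : Hilbert}.

Definition padd (p q : X * X) : X * X := (hadd (fst p) (fst q), hadd (snd p) (snd q)).
Definition pscal a (p : X * X) : X * X := (hscal a (fst p), hscal a (snd p)).
Definition pinner (p q : X * X) : C := Cadd (inner (fst p) (fst q)) (inner (snd p) (snd q)).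

(* Stated in the unfolded form of the [hcomplete] field of [prodH] below. *)
Lemma prod_complete (u : nat -> X * X) :
  (forall eps, 0 < eps -> exists N, forall m n, (N <= m)%nat -> (N <= n)%nat ->
     sqrt (sqnorm (hsub X (fst (u m)) (fst (u n))) + sqnorm (hsub X (snd (u m)) (snd (u n))))
       < eps) ->
  exists l, forall eps, 0 < eps -> exists N, forall n, (N <= n)%nat ->
     sqrt (sqnorm (hsub X (fst (u n)) (fst l)) + sqnorm (hsub X (snd (u n)) (snd l))) < eps.
Proof.
  intros Hu.
  assert (Hc : forall c, 0 < c -> exists N, forall m n, (N <= m)%nat -> (N <= n)%nat ->
     sqnorm (hsub X (fst (u m)) (fst (u n))) < c /\ sqnorm (hsub X (snd (u m)) (snd (u n))) < c).
  { intros c Hc. assert (Hs : 0 < sqrt c) by (apply sqrt_lt_R0; lra).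
    destruct (Hu _ Hs) as [N HN]. exists N. intros m n Hm Hn. specialize (HN m n Hm Hn).
    pose proof (sqnorm_ge0 (hsub X (fst (u m)) (fst (u n)))).
    pose proof (sqnorm_ge0 (hsub X (snd (u m)) (snd (u n)))).
    apply sqrt_lt_iff in HN; [|lra|exact Hs]. rewrite sqrt_sqrt in HN by lra. lra. }
  destruct (cauchy_converges (fun n => fst (u n))) as [l1 Hl1].
  { intros c Hc0. destruct (Hc c Hc0) as [N HN]. exists N. intros m n Hm Hn. now apply HN. }
  destruct (cauchy_converges (fun n => snd (u n))) as [l2 Hl2].
  { intros c Hc0. destruct (Hc c Hc0) as [N HN]. exists N. intros m n Hm Hn. now apply HN. }
  exists (l1, l2). intros e He.
  destruct (proj1 (converges_sqnormE _ _) Hl1 (e * e / 2)) as [N1 H1]; [nra|].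
  destruct (proj1 (converges_sqnormE _ _) Hl2 (e * e / 2)) as [N2 H2]; [nra|].
  exists (max N1 N2). intros n Hn.
  specialize (H1 n ltac:(lia)). specialize (H2 n ltac:(lia)).
  apply sqrt_lt_iff; auto; [|simpl; lra].
  pose proof (sqnorm_ge0 (hsub X (fst (u n)) l1)).
  pose proof (sqnorm_ge0 (hsub X (snd (u n)) l2)). simpl; lra.
Qed.

End Product.

Definition prodH (X : Hilbert) : Hilbert.
Proof.
  refine (Build_Hilbert (X * X) (hzero, hzero) padd pscal pinner
            _ _ _ _ _ _ _ _ _ _ _ _ _ prod_complete).
  - intros [] [] []; unfold padd; simpl; f_equal; apply hadd_assoc.
  - intros [] []; unfold padd; simpl; f_equal; apply hadd_comm.
  - intros []; unfold padd; simpl; f_equal; apply hadd_zero.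
  - intros []; unfold padd, pscal; simpl; f_equal; apply hadd_opp.
  - intros []; unfold pscal; simpl; f_equal; apply hscal_one.
  - intros a b []; unfold pscal; simpl; f_equal; apply hscal_assoc.
  - intros a [] []; unfold padd, pscal; simpl; f_equal; apply hscal_addr.
  - intros a b []; unfold padd, pscal; simpl; f_equal; apply hscal_addl.
  - intros [] [] []; unfold padd, pinner; simpl; rewrite !inner_addl; C_ring.
  - intros a [] []; unfold pscal, pinner; simpl; rewrite !inner_scall; C_ring.
  - intros [x1 x2] [y1 y2]; unfold pinner; simpl.
    rewrite (inner_conj X x1), (inner_conj X x2); C_ring.
  - intros [x1 x2]; unfold pinner; simpl.
    pose proof (inner_pos X x1); pose proof (inner_pos X x2); lra.
  - intros [x y] E. apply (f_equal Re) in E. unfold pinner in E; simpl in E.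
    pose proof (sqnorm_ge0 x) as Hx. pose proof (sqnorm_ge0 y) as Hy.
    unfold sqnorm, rinner in Hx, Hy.
    rewrite (sqnorm_eq0 x), (sqnorm_eq0 y) by (unfold sqnorm, rinner; lra). reflexivity.
Defined.

Lemma prodH_converges {X : Hilbert} (q : nat -> X * X) x y :
  converges (prodH X) q (x, y) ->
  converges X (fun n => fst (q n)) x /\ converges X (fun n => snd (q n)) y.
Proof.
  rewrite !converges_sqnormE. intros Hc.
  split; intros c Hc0; destruct (Hc c Hc0) as [N HN]; exists N; intros n Hn;
    specialize (HN n Hn); change (sqnorm (hsub X (fst (q n)) x) +
      sqnorm (hsub X (snd (q n)) y) < c) in HN;
    pose proof (sqnorm_ge0 (hsub X (fst (q n)) x));
    pose proof (sqnorm_ge0 (hsub X (snd (q n)) y)); simpl; lra.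
Qed.

Section Operators.
Context {X : Hilbert}.

Lemma linear_op_add (T : Op X) x y : linear_op X T -> dom T x -> dom T y ->
  dom T (hadd x y) /\ app T (hadd x y) = hadd (app T x) (app T y).
Proof. intros [_ [Ha _]]; apply Ha. Qed.

Lemma linear_op_scal (T : Op X) a x : linear_op X T -> dom T x ->
  dom T (hscal a x) /\ app T (hscal a x) = hscal a (app T x).
Proof. intros [_ [_ Hs]]; apply Hs. Qed.

Lemma linear_op_app0 (T : Op X) : linear_op X T -> app T hzero = hzero.
Proof.
  intros HT. destruct (linear_op_scal T C0 hzero HT (proj1 HT)) as [_ E].
  now rewrite hscal_C0 in E; rewrite E, hscal_C0.
Qed.

Lemma linear_op_sub (T : Op X) x y : linear_op X T -> dom T x -> dom T y ->
  app T (hsub X x y) = hsub X (app T x) (app T y).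
Proof.
  intros HT Hx Hy. unfold hsub. destruct (linear_op_scal T Cneg1 y HT Hy) as [D1 E1].
  destruct (linear_op_add T _ _ HT Hx D1) as [_ E2]. now rewrite E2, E1.
Qed.

Lemma adjoint_spec (T : Op X) y : dom (adjoint X T) y ->
  forall xi, dom T xi -> inner (app T xi) y = inner xi (app (adjoint X T) y).
Proof.
  intros Hy. exact (epsilon_spec (inhabits hzero)
    (fun z => forall xi, dom T xi -> inner (app T xi) y = inner xi z) Hy).
Qed.

Lemma orth_dense_eq (T : Op X) v v' : densely_defined X T ->
  (forall xi, dom T xi -> inner xi v = inner xi v') -> v = v'.
Proof.
  intros Hd He. apply hsub_eq0. set (d := hsub X v v').
  assert (O : forall xi, dom T xi -> rinner xi d = 0).
  { intros xi Hxi. unfold d, rinner, hsub. rewrite inner_addr, inner_scalr, He by auto.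
    simpl. ring. }
  apply sqnorm_eq0. apply NNPP; intro Nz. pose proof (sqnorm_ge0 d).
  destruct (Hd d (sqrt (sqnorm d))) as [xi [Hxi Hn]]; [apply sqrt_lt_R0; lra|].
  apply sqrt_lt_0_alt in Hn. change (sqnorm (hsub X d xi) < sqnorm d) in Hn.
  pose proof (rinner_sq_le (hsub X d xi) d) as Cs.
  replace (rinner (hsub X d xi) d) with (sqnorm d) in Cs
    by (unfold hsub, Cneg1; rewrite rinner_addl, rinner_scall, (O xi Hxi); unfold sqnorm; ring).
  nra.
Qed.

Lemma adjoint_of_pairing (T : Op X) eta z : densely_defined X T ->
  (forall xi, dom T xi -> inner (app T xi) eta = inner xi z) ->
  dom (adjoint X T) eta /\ app (adjoint X T) eta = z.
Proof.
  intros Hd Hz. assert (D : dom (adjoint X T) eta) by (exists z; exact Hz).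
  split; auto. apply (orth_dense_eq T _ _ Hd). intros xi Hxi. rewrite <- adjoint_spec; auto.
Qed.

Lemma rinner_orth_inner_orth (M : X -> Prop) w :
  (forall m, M m -> M (hscal (mkC 0 1) m)) -> (forall m, M m -> rinner m w = 0) ->
  forall m, M m -> inner m w = C0.
Proof.
  intros Hi Hr m Hm. pose proof (Hr _ Hm) as E1. pose proof (Hr _ (Hi _ Hm)) as E2.
  unfold rinner in *. rewrite inner_scall in E2. simpl in E2. apply C_eq; simpl; lra.
Qed.

Section BoundedMetric.
Variable G : Op X.
Hypotheses (G_bdd : bounded_op X G) (G_metric : metric_operator X G).

Lemma metric_sym x y : inner (app G x) y = inner x (app G y).
Proof.
  destruct G_bdd as [DG _]. destruct G_metric as [_ [[Hs1 Hs2] _]].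
  rewrite (adjoint_spec G y (proj2 (Hs1 y) (DG y)) x (DG x)), Hs2 by apply DG. reflexivity.
Qed.

Lemma metric_inj x y : app G x = app G y -> x = y.
Proof.
  intros E. destruct G_bdd as [DG _]. destruct G_metric as [L [_ P]]. apply hsub_eq0.
  apply NNPP; intro N. specialize (P _ (DG _) N).
  rewrite (linear_op_sub G x y L (DG _) (DG _)), E in P.
  unfold hsub in P. rewrite hadd_opp, inner_zero_l in P. simpl in P. lra.
Qed.

Variable A : Op X.

Lemma star_op_pairing eta : dom (star_op X G A) eta -> forall xi, dom A xi ->
  inner (app G (app A xi)) eta = inner (app G xi) (app (star_op X G A) eta).
Proof.
  intros [D1 D2] xi Hxi. simpl.
  destruct (epsilon_spec (inhabits hzero)
    (fun x => dom G x /\ app G x = app (adjoint X A) (app G eta)) D2) as [_ E].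
  rewrite metric_sym, (adjoint_spec A (app G eta) D1 xi Hxi), <- E, metric_sym.
  reflexivity.
Qed.

Lemma star_op_of_pairing eta z : densely_defined X A ->
  (forall xi, dom A xi -> inner (app G (app A xi)) eta = inner (app G xi) z) ->
  dom (star_op X G A) eta /\ app (star_op X G A) eta = z.
Proof.
  intros Hd Hz.
  destruct (adjoint_of_pairing A (app G eta) (app G z) Hd) as [D1 E1].
  { intros xi Hxi. now rewrite <- metric_sym, Hz, metric_sym. }
  assert (D2 : dom (op_inverse X G) (app (adjoint X A) (app G eta))).
  { rewrite E1. exists z. split; auto. apply G_bdd. }
  split; [split; auto|].
  destruct (epsilon_spec (inhabits hzero)
    (fun x => dom G x /\ app G x = app (adjoint X A) (app G eta)) D2) as [_ E].
  rewrite E1 in E. apply metric_inj in E.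
  change (app (op_inverse X G) (app (adjoint X A) (app G eta)) = z). now rewrite E1.
Qed.

End BoundedMetric.
End Operators.

Section StarOperator.
Variables (H : Hilbert) (A B G : Op H).
Hypotheses (A_lin : linear_op H A) (A_dense : densely_defined H A).
Hypotheses (G_bdd : bounded_op H G) (G_metric : metric_operator H G).

Local Notation Astar := (star_op H G A).

Lemma star_op_zero : dom Astar hzero.
Proof.
  apply (star_op_of_pairing G G_bdd G_metric A hzero hzero A_dense).
  intros. now rewrite !inner_zero_r.
Qed.

Lemma star_op_add a b : dom Astar a -> dom Astar b -> dom Astar (hadd a b).
Proof.
  intros Ha Hb.
  apply (star_op_of_pairing G G_bdd G_metric A _ (hadd (app Astar a) (app Astar b)) A_dense).
  intros xi Hxi. now rewrite !inner_addr, !(star_op_pairing G G_bdd G_metric A).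
Qed.

Lemma star_op_scal c a : dom Astar a -> dom Astar (hscal c a).
Proof.
  intros Ha. apply (star_op_of_pairing G G_bdd G_metric A _ (hscal c (app Astar a)) A_dense).
  intros xi Hxi. now rewrite !inner_scalr, !(star_op_pairing G G_bdd G_metric A).
Qed.

(* By intertwining, this is the part of graph(B) lying over [G D(A)]. *)
Definition GA_graph (p : prodH H) : Prop :=
  exists xi, dom A xi /\ p = (app G xi, app G (app A xi)).

Lemma GA_graph_add p q : GA_graph p -> GA_graph q -> GA_graph (hadd p q).
Proof.
  intros [x1 [Hx1 ->]] [x2 [Hx2 ->]]. destruct (linear_op_add A x1 x2 A_lin Hx1 Hx2) as [D E].
  exists (hadd x1 x2); split; auto. cbn. unfold padd; simpl.
  destruct G_metric as [LG _]. destruct G_bdd as [DG _].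
  rewrite E, (proj2 (linear_op_add G x1 x2 LG (DG _) (DG _))),
    (proj2 (linear_op_add G (app A x1) (app A x2) LG (DG _) (DG _))). reflexivity.
Qed.

Lemma GA_graph_scal c p : GA_graph p -> GA_graph (hscal c p).
Proof.
  intros [x1 [Hx1 ->]]. destruct (linear_op_scal A c x1 A_lin Hx1) as [D E].
  exists (hscal c x1); split; auto. cbn. unfold pscal; simpl.
  destruct G_metric as [LG _]. destruct G_bdd as [DG _].
  rewrite E, (proj2 (linear_op_scal G c x1 LG (DG _))),
    (proj2 (linear_op_scal G c (app A x1) LG (DG _))). reflexivity.
Qed.

Lemma GA_graph_orth a b : (forall m, GA_graph m -> rinner m ((a, b) : prodH H) = 0) ->
  dom Astar b /\ app Astar b = hscal Cneg1 a.
Proof.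
  intros Hr.
  pose proof (rinner_orth_inner_orth GA_graph ((a, b) : prodH H)
    (fun m => GA_graph_scal _ m) Hr) as Hc.
  apply (star_op_of_pairing G G_bdd G_metric A _ _ A_dense). intros xi Hxi.
  specialize (Hc _ (ex_intro _ xi (conj Hxi eq_refl))). cbn in Hc. unfold pinner in Hc.
  simpl in Hc. rewrite inner_scalr.
  apply (f_equal Re) in Hc as Hre. apply (f_equal Im) in Hc as Him. simpl in Hre, Him.
  apply C_eq; simpl; lra.
Qed.

Lemma GA_graph_approx x y :
  (forall b, dom Astar b -> inner x (app Astar b) = inner y b) ->
  exists q, (forall n, GA_graph (q n)) /\ converges (prodH H) q ((x, y) : prodH H).
Proof.
  intros Hxy. apply approx_of_orth_orth.
  - exists (app G hzero, app G (app A hzero)), hzero. split; auto. apply A_lin.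
  - exact GA_graph_add.
  - intros r. apply GA_graph_scal.
  - intros [a b] Hab. destruct (GA_graph_orth a b Hab) as [Db Eb].
    specialize (Hxy b Db). rewrite Eb, inner_scalr in Hxy.
    apply (f_equal Re) in Hxy. unfold rinner; cbn; unfold pinner; simpl in *. lra.
Qed.

Theorem star_op_dense : linear_op H B -> closed_op H B -> intertwines H G A B ->
  densely_defined H Astar.
Proof.
  intros B_lin B_closed GAB x eps Heps.
  destruct (approx_of_orth_orth (dom Astar) (ex_intro _ hzero star_op_zero) star_op_add
    (fun r => star_op_scal _) x) as [u [Hu Cu]].
  - intros w Hw.
    assert (w0 : w = hzero).
    { destruct (GA_graph_approx hzero w) as [q [Gq Cq]].
      { intros b Db. rewrite inner_zero_l, (inner_conj H b w),
          (rinner_orth_inner_orth (dom Astar) w (fun m => star_op_scal _ m) Hw b Db).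
        C_ring. }
      apply prodH_converges in Cq as [C1 C2].
      assert (PQ : forall n, dom B (fst (q n)) /\ app B (fst (q n)) = snd (q n)).
      { intro n. destruct (Gq n) as [xi [Hxi ->]]. apply GAB, Hxi. }
      destruct (B_closed (fun n => fst (q n)) hzero w (fun n => proj1 (PQ n)) C1) as [_ E].
      { apply (converges_ext (fun n => snd (q n))); auto. intro n. symmetry; apply PQ. }
      now rewrite linear_op_app0 in E. }
    subst w. apply rinner_zero_r.
  - destruct (Cu eps Heps) as [N HN]. exists (u N). split; auto.
    specialize (HN N (le_n _)). unfold hnorm in *.
    change (sqrt (sqnorm (hsub H x (u N))) < eps). now rewrite sqnorm_sub_sym.
Qed.

Section Adjoint.
Hypothesis star_dense : densely_defined H Astar.

Theorem intertwines_star_adjoint : intertwines H G A (adjoint H Astar).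
Proof.
  intros xi Hxi. apply (adjoint_of_pairing Astar _ _ star_dense). intros v Hv.
  rewrite (inner_conj H (app G xi)), <- (star_op_pairing G G_bdd G_metric A v Hv xi Hxi),
    (inner_conj H (app G (app A xi)) v). reflexivity.
Qed.

Theorem star_adjoint_core :
  is_core H (adjoint H Astar) (fun y => exists xi, dom A xi /\ y = app G xi).
Proof.
  split.
  - intros y [xi [Hxi ->]]. apply intertwines_star_adjoint, Hxi.
  - intros x Hx. set (y := app (adjoint H Astar) x).
    destruct (GA_graph_approx x y) as [q [Gq Cq]].
    { intros b Db.
      now rewrite (inner_conj H _ x), (adjoint_spec Astar x Hx b Db), (inner_conj H b y). }
    apply prodH_converges in Cq as [C1 C2].
    exists (fun n => fst (q n)). repeat split; auto.
    + intro n. destruct (Gq n) as [xi [Hxi ->]]. exists xi; auto.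
    + apply (converges_ext (fun n => snd (q n))); auto. intro n.
      destruct (Gq n) as [xi [Hxi ->]]. symmetry. apply intertwines_star_adjoint, Hxi.
Qed.

Theorem star_adjoint_minimal B' : closed_op H B' -> intertwines H G A B' ->
  op_incl H (adjoint H Astar) B'.
Proof.
  intros B'_closed GAB' x Hx.
  destruct (proj2 star_adjoint_core x Hx) as [u [Du [Cu Cau]]].
  assert (PU : forall n, dom B' (u n) /\ app B' (u n) = app (adjoint H Astar) (u n)).
  { intro n. destruct (Du n) as [xi [Hxi ->]].
    destruct (GAB' xi Hxi) as [D1 E1]. destruct (intertwines_star_adjoint xi Hxi) as [_ E2].
    now rewrite E1, E2. }
  apply (B'_closed u x _ (fun n => proj1 (PU n)) Cu).
  exact (converges_ext _ _ _ (fun n => eq_sym (proj2 (PU n))) Cau).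
Qed.

End Adjoint.
End StarOperator.

Theorem lemma5p8 (H : Hilbert) (A B G : Op H) :
  linear_op H A -> closed_op H A -> densely_defined H A ->
  linear_op H B -> closed_op H B -> densely_defined H B ->
  bounded_op H G -> metric_operator H G ->
  intertwines H G A B ->
  densely_defined H (star_op H G A) /\
  intertwines H G A (adjoint H (star_op H G A)) /\
  (forall B' : Op H, linear_op H B' -> closed_op H B' -> intertwines H G A B' ->
     op_incl H (adjoint H (star_op H G A)) B') /\
  is_core H (adjoint H (star_op H G A)) (fun y => exists xi, dom A xi /\ y = app G xi).
Proof.
  intros A_lin _ A_dense B_lin B_closed _ G_bdd G_metric GAB.
  assert (Dense : densely_defined H (star_op H G A))
    by exact (star_op_dense H A B G A_lin A_dense G_bdd G_metric B_lin B_closed GAB).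
  split; [exact Dense|split; [|split]].
  - exact (intertwines_star_adjoint H A G G_bdd G_metric Dense).
  - intros B' _ B'_closed GAB'.
    exact (star_adjoint_minimal H A G A_lin A_dense G_bdd G_metric Dense B' B'_closed GAB').
  - exact (star_adjoint_core H A G A_lin A_dense G_bdd G_metric Dense).
Qed.
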